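(* Consider a parallel system (so $\phi(s)=1$ if and only if $s_k=1$ for at least one $k$), with an arbitrary joint prior distribution of the component states and with inspection error rates $\epsilon_{FA},\epsilon_{FS}\in[0,1/2)$ identical for all components. For any two components $c_i,c_j$ with $p_i\le p_j$, we have $I_i\supseteq I_j$, i.e. $p_{\omega|y_i=1}\le p_{\omega|y_j=1}\le p_{\omega|y_j=0}\le p_{\omega|y_i=0}$, and consequently $\mathrm{VoI}_G(i)\ge\mathrm{VoI}_G(j)$ for every concave function $l^*$. In particular, the most reliable component (the one with the lowest marginal failure probability) has the highest $\mathrm{VoI}_G$, regardless of $l^*$.
   Context: A system consists of $N$ binary components $c_1,\dots,c_N$ with random joint state $s=(s_1,\dots,s_N)\in\{0,1\}^N$ ($s_k=1$: working; $s_k=0$: failed), with arbitrary prior distribution $p_s$. The system state is $u=\phi(s)$ ($u=0$: system failure), $p_\pi=\mathbb{P}[u=0]$, and $p_k=\mathbb{P}[s_k=0]$ is the marginal failure probability of $c_k$. Inspecting $c_k$ yields a binary observation $y_k$ (alarm $y_k=0$, silence $y_k=1$) which, given $s$, depends only on $s_k$, with $\mathbb{P}[y_k=1\mid s_k=0]=\epsilon_{FS}$ and $\mathbb{P}[y_k=0\mid s_k=1]=\epsilon_{FA}$. Then $h_k=\mathbb{P}[y_k=0]=\epsilon_{FA}+(1-\epsilon_{FA}-\epsilon_{FS})p_k$; posterior system failure probabilities are $p_{\omega|y_k=b}=\mathbb{P}[u=0\mid y_k=b]$ (defined when the conditioning event has positive probability), and $I_k=[p_{\omega|y_k=1},p_{\omega|y_k=0}]$.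 Global metric: for a concave $l^*:[0,1]\to\mathbb{R}$, $L^G_\pi=l^*(p_\pi)$, $L^G_\omega(k)=h_k\,l^*(p_{\omega|y_k=0})+(1-h_k)\,l^*(p_{\omega|y_k=1})$ (a term with zero probability is omitted), and $\mathrm{VoI}_G(k)=L^G_\pi-L^G_\omega(k)$. *)

(* Finite discrete probability over the joint component
   states s : {ffun 'I_N -> bool} (true = working, false = failed). *)
From mathcomp Require Import all_boot all_order all_algebra.
Set Implicit Arguments. Unset Strict Implicit. Unset Printing Implicit Defensive.
Import Order.TTheory GRing.Theory Num.Theory.
Local Open Scope ring_scope.

Section Defs.
Variables (R : realFieldType) (N : nat).

Definition state := {ffun 'I_N -> bool}.

Definition is_prior (ps : state -> R) : Prop :=
  (forall s, 0 <= ps s) /\ \sum_(s : state) ps s = 1.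

Definition phi_par (s : state) : bool := [exists k, s k].

(* observation model P[y_k = yk | s_k = sk]; yk = false is the alarm (y=0) *)
Definition lik (eFA eFS : R) (sk yk : bool) : R :=
  if sk then (if yk then 1 - eFA else eFA)
  else (if yk then eFS else 1 - eFS).

Definition pmarg (ps : state -> R) (k : 'I_N) : R :=
  \sum_(s : state | ~~ s k) ps s.

Definition p_pi (phi : state -> bool) (ps : state -> R) : R :=
  \sum_(s : state | ~~ phi s) ps s.

Definition prob_y (ps : state -> R) (eFA eFS : R) (k : 'I_N) (b : bool) : R :=
  \sum_(s : state) ps s * lik eFA eFS (s k) b.

Definition prob_fail_y (phi : state -> bool) (ps : state -> R) (eFA eFS : R)
    (k : 'I_N) (b : bool) : R :=
  \sum_(s : state | ~~ phi s) ps s * lik eFA eFS (s k) b.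

Definition hk (ps : state -> R) (eFA eFS : R) (k : 'I_N) : R :=
  prob_y ps eFA eFS k false.

(* posterior p_{omega | y_k = b} (meaningful only when P[y_k = b] > 0) *)
Definition post (phi : state -> bool) (ps : state -> R) (eFA eFS : R)
    (k : 'I_N) (b : bool) : R :=
  prob_fail_y phi ps eFA eFS k b / prob_y ps eFA eFS k b.

Definition concave01 (l : R -> R) : Prop :=
  forall x y t : R, 0 <= x <= 1 -> 0 <= y <= 1 -> 0 <= t <= 1 ->
    t * l x + (1 - t) * l y <= l (t * x + (1 - t) * y).

Definition LG_omega (l : R -> R) (phi : state -> bool) (ps : state -> R)
    (eFA eFS : R) (k : 'I_N) : R :=
  let h := hk ps eFA eFS k in
  (if h == 0 then 0 else h * l (post phi ps eFA eFS k false)) +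
  (if 1 - h == 0 then 0 else (1 - h) * l (post phi ps eFA eFS k true)).

Definition VoI_G (l : R -> R) (phi : state -> bool) (ps : state -> R)
    (eFA eFS : R) (k : 'I_N) : R :=
  l (p_pi phi ps) - LG_omega l phi ps eFA eFS k.

End Defs.

(* In a parallel system the failure event is the single state in which every
   component has failed, so P[u = 0, y_k = b] = p_pi * P[y_k = b | s_k = 0]
   does not depend on k: only the denominator P[y_k = b] does, and it is an
   affine function of p_k, increasing for the alarm and decreasing for
   silence when eFA + eFS < 1. Hence a more reliable component has a smaller
   alarm probability, a larger posterior after an alarm and a smaller one
   after silence. Both posterior distributions are two-point distributions
   with the same mean p_pi, the one of the more reliable component being a
   spread of the other, and a concave l* has a smaller expectation under the
   spread. *)
From mathcomp Require Import all_boot all_order all_algebra.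
From mathcomp Require Import ring lra.
Set Implicit Arguments.
Unset Strict Implicit.
Unset Printing Implicit Defensive.
Import Order.TTheory GRing.Theory Num.Theory.
Local Open Scope ring_scope.

Section Division.
Variable R : realFieldType.
Implicit Types a b h k : R.

Lemma mulr_divK_dom b h : 0 <= b -> b <= h -> h * (b / h) = b.
Proof.
move=> b_ge0 b_le_h; have [h0|h_neq0] := eqVneq h 0; last by rewrite mulrC divfK.
by rewrite h0 mul0r; lra.
Qed.

Lemma divr_dom_le1 b h : 0 <= b -> b <= h -> b / h <= 1.
Proof.
move=> b_ge0 b_le_h; have [->|h_neq0] := eqVneq h 0; first by rewrite invr0 mulr0.
by rewrite ler_pdivrMr ?mul1r // lt_def h_neq0; lra.
Qed.

Lemma ler_div2l_dom b h (h' : R) : 0 <= b -> b <= h -> h <= h' -> b / h' <= b / h.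
Proof.
move=> b_ge0 b_le_h h_le_h'; have [->|b_neq0] := eqVneq b 0; first by rewrite !mul0r.
have h_gt0 : 0 < h by rewrite (lt_le_trans _ b_le_h) // lt_def b_neq0.
by rewrite ler_wpM2l // lef_pV2 ?posrE // (lt_le_trans h_gt0).
Qed.

Lemma ler_div_cross a b h k :
  0 <= a -> 0 < h -> 0 <= k -> b * h <= a * k -> b / k <= a / h.
Proof.
move=> a_ge0 h_gt0 k_ge0 cross; have [->|k_neq0] := eqVneq k 0.
  by rewrite invr0 mulr0 divr_ge0 // ltW.
have k_gt0 : 0 < k by rewrite lt_def k_neq0.
by rewrite ler_pdivrMr // mulrAC ler_pdivlMr.
Qed.

Lemma if_eq0_mulr h x : (if h == 0 then 0 else h * x) = h * x.
Proof. by case: eqP => // ->; rewrite mul0r. Qed.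

End Division.

Section ConcaveTwoPoint.
Variables (R : realFieldType) (l : R -> R).
Hypothesis l_concave : concave01 l.

Lemma concave01_chord x1 x2 y :
  0 <= x1 -> x2 <= 1 -> x1 <= y -> y <= x2 -> x1 < x2 ->
  (y - x1) / (x2 - x1) * l x2 + (1 - (y - x1) / (x2 - x1)) * l x1 <= l y.
Proof.
move=> x1_ge0 x2_le1 x1_le_y y_le_x2 x1_lt_x2.
have t01 : 0 <= (y - x1) / (x2 - x1) <= 1.
  by rewrite divr_ge0 ?divr_dom_le1 //; lra.
have y_mix : (y - x1) / (x2 - x1) * x2 + (1 - (y - x1) / (x2 - x1)) * x1 = y.
  by field; rewrite subr_eq0 gt_eqF.
by have := l_concave (x := x2) (y := x1) _ _ t01; rewrite y_mix; apply; lra.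
Qed.

Lemma concave01_spread_le hx hy x1 x2 y1 y2 :
  0 <= hy <= 1 -> 0 <= x1 -> x2 <= 1 -> x1 <= y1 -> y1 <= y2 -> y2 <= x2 ->
  hx * x2 + (1 - hx) * x1 = hy * y2 + (1 - hy) * y1 ->
  hx * l x2 + (1 - hx) * l x1 <= hy * l y2 + (1 - hy) * l y1.
Proof.
move=> /andP[hy_ge0 hy_le1] x1_ge0 x2_le1 x1_le_y1 y1_le_y2 y2_le_x2 same_mean.
have [x1_eq_x2|x1_neq_x2] := eqVneq x1 x2.
  have -> : y1 = x1 by lra.
  have -> : y2 = x1 by lra.
  by rewrite -x1_eq_x2; lra.
have x1_lt_x2 : x1 < x2 by rewrite lt_def eq_sym x1_neq_x2; lra.
have chord1 := concave01_chord x1_ge0 x2_le1 x1_le_y1 (le_trans y1_le_y2 y2_le_x2) x1_lt_x2.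
have chord2 := concave01_chord x1_ge0 x2_le1 (le_trans x1_le_y1 y1_le_y2) y2_le_x2 x1_lt_x2.
set t1 := (y1 - x1) / (x2 - x1) in chord1.
set t2 := (y2 - x1) / (x2 - x1) in chord2.
have -> : hx = hy * t2 + (1 - hy) * t1.
  apply: (@mulIf _ (x2 - x1)); first by rewrite subr_eq0 eq_sym.
  rewrite mulrDl -!mulrA !mulVf ?mulr1 ?subr_eq0 1?eq_sym //; lra.
apply: le_trans (lerD (ler_wpM2l hy_ge0 chord2) (ler_wpM2l _ chord1)); lra.
Qed.

End ConcaveTwoPoint.

Definition alarm_prob (R : realFieldType) (eFA eFS p : R) : R :=
  (1 - p) * eFA + p * (1 - eFS).

Section Prior.
Variables (R : realFieldType) (N : nat) (ps : state N -> R) (eFA eFS : R).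
Hypothesis ps_prior : is_prior ps.

Lemma p_pi_ge0 (phi : state N -> bool) : 0 <= p_pi phi ps.
Proof. by rewrite /p_pi sumr_ge0 //; case: ps_prior. Qed.

Lemma sum_working k : \sum_(s : state N | s k) ps s = 1 - pmarg ps k.
Proof.
case: ps_prior => _ ps_sum1.
by rewrite /pmarg -ps_sum1 [X in _ = X - _](bigID (fun s : state N => s k)) addrK.
Qed.

Lemma pmarg_le1 k : pmarg ps k <= 1.
Proof.
case: ps_prior => ps_ge0 _.
by rewrite -subr_ge0 -sum_working sumr_ge0.
Qed.

Lemma prob_y_pmarg k b : prob_y ps eFA eFS k b =
  (1 - pmarg ps k) * lik eFA eFS true b + pmarg ps k * lik eFA eFS false b.
Proof.
rewrite /prob_y (bigID (fun s : state N => s k)) /= -sum_working /pmarg !mulr_suml.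
by congr (_ + _); apply: eq_bigr => s sk; rewrite ?(negbTE sk) ?sk mulrC.
Qed.

Lemma prob_y_alarm k : prob_y ps eFA eFS k false = alarm_prob eFA eFS (pmarg ps k).
Proof. by rewrite prob_y_pmarg. Qed.

Lemma prob_y_silence k : prob_y ps eFA eFS k true = 1 - alarm_prob eFA eFS (pmarg ps k).
Proof. by rewrite prob_y_pmarg /alarm_prob /lik; ring. Qed.

Let all_failed : state N := [ffun=> false].

Lemma big_phi_par_failed (F : state N -> R) :
  \sum_(s | ~~ phi_par s) F s = F all_failed.
Proof.
apply: big_pred1 => s; rewrite /phi_par negb_exists /=.
apply/forallP/eqP => [s_failed|->]; last by move=> k; rewrite ffunE.
by apply/ffunP => k; rewrite ffunE; apply/negbTE.
Qed.

Lemma p_pi_par_le_pmarg k : p_pi (@phi_par N) ps <= pmarg ps k.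
Proof.
case: ps_prior => ps_ge0 _.
rewrite /p_pi big_phi_par_failed /pmarg (bigD1 all_failed) ?ffunE //=.
by rewrite lerDl sumr_ge0.
Qed.

Lemma prob_fail_y_par k b :
  prob_fail_y (@phi_par N) ps eFA eFS k b = p_pi (@phi_par N) ps * lik eFA eFS false b.
Proof. by rewrite /prob_fail_y /p_pi !big_phi_par_failed ffunE. Qed.

End Prior.

Section BinaryInspection.
Variables (R : realFieldType) (eFA eFS q : R).
Hypotheses (eFA_ge0 : 0 <= eFA) (eFS_ge0 : 0 <= eFS) (informative : eFA + eFS < 1).
Hypothesis q_ge0 : 0 <= q.

Local Notation h := (alarm_prob eFA eFS).
Local Notation fail_alarm := (q * (1 - eFS)).
Local Notation fail_silence := (q * eFS).

(* [lra] ignores section hypotheses, so they are passed to it explicitly. *)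
Local Ltac lra_inspection := move: (eFA_ge0) (eFS_ge0) (informative); lra.

Lemma alarm_prob_le (p p' : R) : p <= p' -> h p <= h p'.
Proof.
move=> p_le_p'; rewrite /alarm_prob -subr_ge0.
have -> : (1 - p') * eFA + p' * (1 - eFS) - ((1 - p) * eFA + p * (1 - eFS))
          = (p' - p) * (1 - eFA - eFS) by ring.
by rewrite mulr_ge0 //; lra_inspection.
Qed.

Lemma fail_alarm_le (p : R) : q <= p -> p <= 1 -> fail_alarm <= h p.
Proof.
move=> q_le_p p_le1; rewrite /alarm_prob -subr_ge0.
have -> : (1 - p) * eFA + p * (1 - eFS) - q * (1 - eFS)
          = (1 - p) * eFA + (p - q) * (1 - eFS) by ring.
by rewrite addr_ge0 ?mulr_ge0 //; lra_inspection.
Qed.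

Lemma fail_silence_le (p : R) : q <= p -> p <= 1 -> fail_silence <= 1 - h p.
Proof.
move=> q_le_p p_le1; rewrite /alarm_prob -subr_ge0.
have -> : 1 - ((1 - p) * eFA + p * (1 - eFS)) - q * eFS
          = (1 - p) * (1 - eFA) + (p - q) * eFS by ring.
by rewrite addr_ge0 ?mulr_ge0 //; lra_inspection.
Qed.

Lemma post_alarm_antimono (p p' : R) : q <= p -> p <= 1 -> p <= p' ->
  fail_alarm / h p' <= fail_alarm / h p.
Proof.
move=> q_le_p p_le1 p_le_p'.
by rewrite ler_div2l_dom ?fail_alarm_le ?alarm_prob_le ?mulr_ge0 //; lra_inspection.
Qed.

Lemma post_silence_mono (p p' : R) : q <= p -> p <= p' -> p' <= 1 ->
  fail_silence / (1 - h p) <= fail_silence / (1 - h p').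
Proof.
move=> q_le_p p_le_p' p'_le1.
rewrite ler_div2l_dom ?mulr_ge0 ?fail_silence_le ?lerB ?alarm_prob_le //.
exact: le_trans p_le_p'.
Qed.

Lemma post_silence_le_alarm (p : R) : q <= p -> p <= 1 -> 0 < h p ->
  fail_silence / (1 - h p) <= fail_alarm / h p.
Proof.
move=> q_le_p p_le1 h_gt0.
have silence_ge0 : 0 <= 1 - h p.
  by apply: le_trans (fail_silence_le q_le_p p_le1); rewrite mulr_ge0.
apply: ler_div_cross => //; first by rewrite mulr_ge0 //; lra_inspection.
rewrite -subr_ge0.
have -> : q * (1 - eFS) * (1 - h p) - q * eFS * h p
          = q * ((1 - p) * (1 - eFA - eFS)) by rewrite /alarm_prob; ring.
by rewrite !mulr_ge0 //; lra_inspection.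
Qed.

Lemma expected_loss_le (l : R -> R) (p p' : R) :
  concave01 l -> q <= p -> p <= p' -> p' <= 1 ->
  h p * l (fail_alarm / h p) + (1 - h p) * l (fail_silence / (1 - h p))
  <= h p' * l (fail_alarm / h p') + (1 - h p') * l (fail_silence / (1 - h p')).
Proof.
move=> l_concave q_le_p p_le_p' p'_le1.
have q_le_p' := le_trans q_le_p p_le_p'.
have p_le1 := le_trans p_le_p' p'_le1.
have [->|q_neq0] := eqVneq q 0; first by rewrite !mul0r -!mulrDl !subrKC !mul1r.
have fail_alarm_gt0 : 0 < fail_alarm.
  by rewrite mulr_gt0 ?lt_def ?q_neq0 //; lra_inspection.
have fail_silence_ge0 : 0 <= fail_silence by rewrite mulr_ge0.
have alarm_ge := fail_alarm_le q_le_p p_le1.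
have alarm'_ge := fail_alarm_le q_le_p' p'_le1.
have silence_ge := fail_silence_le q_le_p p_le1.
have silence'_ge := fail_silence_le q_le_p' p'_le1.
apply: concave01_spread_le => //.
- by apply/andP; split; lra.
- by rewrite divr_ge0 //; lra.
- by rewrite divr_dom_le1 // ltW.
- exact: post_silence_mono.
- by apply: post_silence_le_alarm => //; lra.
- exact: post_alarm_antimono.
- by rewrite !mulr_divK_dom // ltW.
Qed.

End BinaryInspection.

Theorem mainTheorem2 (R : realFieldType) (N : nat) (ps : state N -> R)
    (eFA eFS : R) (i j : 'I_N) :
  is_prior ps ->
  0 <= eFA -> eFA < 1 / 2 -> 0 <= eFS -> eFS < 1 / 2 ->
  pmarg ps i <= pmarg ps j ->
  let phi := @phi_par N in
  (* I_i contains I_j: each inequality whenever both sides are defined *)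
  (prob_y ps eFA eFS i true > 0 -> prob_y ps eFA eFS j true > 0 ->
     post phi ps eFA eFS i true <= post phi ps eFA eFS j true) /\
  (prob_y ps eFA eFS j true > 0 -> prob_y ps eFA eFS j false > 0 ->
     post phi ps eFA eFS j true <= post phi ps eFA eFS j false) /\
  (prob_y ps eFA eFS j false > 0 -> prob_y ps eFA eFS i false > 0 ->
     post phi ps eFA eFS j false <= post phi ps eFA eFS i false) /\
  (* VoI ordering for every concave l* *)
  (forall l : R -> R, concave01 l ->
     VoI_G l phi ps eFA eFS j <= VoI_G l phi ps eFA eFS i).
Proof.
move=> prior eFA_ge0 eFA_lt eFS_ge0 eFS_lt pi_le_pj phi.
have informative : eFA + eFS < 1 by lra.
have q_ge0 := p_pi_ge0 prior phi.
have q_le_pi := p_pi_par_le_pmarg prior i.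
have q_le_pj := p_pi_par_le_pmarg prior j.
have pj_le1 := pmarg_le1 prior j.
have pi_le1 := le_trans pi_le_pj pj_le1.
rewrite /VoI_G /LG_omega /post /hk !prob_fail_y_par.
rewrite !prob_y_alarm // !prob_y_silence // /lik /=.
split; [|split; [|split]].
- by move=> _ _; apply: post_silence_mono.
- by move=> _; apply: post_silence_le_alarm.
- by move=> _ _; apply: post_alarm_antimono.
- by move=> l l_concave; rewrite !if_eq0_mulr lerB // expected_loss_le.
Qed.
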